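(* Let $n>2$ and $q>0$ be integers such that $n$ is even or $q$ is odd, and let $p>\max\{n,(q-1)n+1\}$ be a prime. Then $$ \sum_{k=0}^{p-q}\frac{(q)_k^n}{(1)_k^n}\left(H_k^{(1)}-H_{q+k-1}^{(1)}\right)\equiv0\pmod{p} $$ and $$ \sum_{k=0}^{p-q}\frac{(q)_k^n}{(1)_k^n}\left((H_k^{(1)})^2-(H_{q+k-1}^{(1)})^2\right)\equiv0\pmod{p}. $$
   Context: $(x)_k$ denotes the Pochhammer symbol: $(x)_0=1$ and $(x)_k=x(x+1)\cdots(x+k-1)$ for $k>0$. $H_k^{(1)}=\sum_{j=1}^k 1/j$ is the $k$th harmonic number (with $H_0^{(1)}=0$). A congruence between rational numbers modulo $p^m$ means their difference lies in $p^m\mathbb{Z}_{(p)}$, where $\mathbb{Z}_{(p)}$ is the ring of rationals whose denominators are coprime to $p$. *)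

From mathcomp Require Import all_boot all_order all_algebra.
Set Implicit Arguments. Unset Strict Implicit. Unset Printing Implicit Defensive.
Import Order.TTheory GRing.Theory Num.Theory.
Local Open Scope ring_scope.

Definition poch (x : rat) (k : nat) : rat := \prod_(i < k) (x + i%:R).

Definition harm (k : nat) : rat := \sum_(1 <= j < k.+1) (j%:R)^-1.

(* x lies in p^m Z_(p): denominator coprime to p and p^m divides numerator. *)
Definition in_pZp (p m : nat) (x : rat) : Prop :=
  coprime p `|denq x|%N /\ ((p ^ m)%:Z %| numq x)%Z.

Definition rat_cong (p m : nat) (a b : rat) : Prop := in_pZp p m (a - b).

From mathcomp Require Import all_boot all_order all_algebra.
From mathcomp Require Import zify ring.
Set Implicit Arguments. Unset Strict Implicit. Unset Printing Implicit Defensive.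
Import GRing.Theory Num.Theory.
Local Open Scope ring_scope.

(* Reduce modulo p.  The summand is C(q+k-1, k)^n (E(H_k) - E(H_(q+k-1))) with
   E(x) = x or x^2, and the reflection k -> p-q-k negates it modulo p: on the
   one hand C(p-1-k, q-1) = (-1)^(q-1) C(k+q-1, q-1) and (q-1)n is even, on the
   other hand H_(p-1-j) = H_j because H_(p-1) = 0, so the two harmonic numbers
   are swapped.  An antisymmetric sum vanishes as p is odd. *)

Definition harmonic {R : unitRingType} (k : nat) : R :=
  \sum_(1 <= j < k.+1) j%:R^-1.

Lemma harmonicS (R : unitRingType) k :
  harmonic k.+1 = harmonic k + k.+1%:R^-1 :> R.
Proof. exact: big_nat_recr. Qed.

Lemma prime_dvd_fact p m : prime p -> (p %| m`!)%N = (p <= m)%N.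
Proof.
move=> p_pr; case: leqP => [le_pm | lt_mp]; first by rewrite dvdn_fact ?prime_gt0.
rewrite fact_prod Euclid_dvd_prod // big_nat big1 // => i.
by case/andP=> i_gt0 lt_im; rewrite gtnNdvd //; lia.
Qed.

Lemma sum_antisym_eq0 (R : idomainType) N (T : nat -> R) :
  2%:R != 0 :> R -> (forall k, (k <= N)%N -> T (N - k)%N = - T k) ->
  \sum_(0 <= k < N.+1) T k = 0.
Proof.
move=> two_neq0 T_antisym.
have sum_opp : \sum_(0 <= k < N.+1) T k = - \sum_(0 <= k < N.+1) T k.
  rewrite {1}big_nat_rev -sumrN !big_nat; apply: eq_bigr => k /andP[_ le_kN].
  by rewrite add0n subSS T_antisym.
have : 2%:R * \sum_(0 <= k < N.+1) T k = 0.
  by rewrite mulr2n mulrDl mul1r {1}sum_opp addNr.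
by move/eqP; rewrite mulf_eq0 (negbTE two_neq0) => /eqP.
Qed.

Section PrimeCharacteristic.

Variables (R : fieldType) (p : nat).
Hypothesis pchar_p : p \in [pchar R].

Lemma natrN_pchar a b : (a + b)%N = p -> a%:R = - b%:R :> R.
Proof. by move=> ab_p; apply/eqP; rewrite -subr_eq0 opprK -natrD ab_p pcharf0. Qed.

Lemma ffact_reflect k m :
  (k + m < p)%N -> ((p.-1 - k) ^_ m)%:R = (-1) ^+ m * ((k + m) ^_ m)%:R :> R.
Proof.
elim: m => [|m IH] lt_kmp; first by rewrite !ffactn0 mulr1.
have km_p : (p.-1 - k - m + (k + m).+1)%N = p by lia.
rewrite ffactnSr addnS ffactSS !natrM IH 1?(natrN_pchar km_p) ?exprS; last lia.
ring.
Qed.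

Lemma pchar_fact_neq0 m : (m < p)%N -> m`!%:R != 0 :> R.
Proof.
by rewrite -(dvdn_pcharf pchar_p) prime_dvd_fact ?(pcharf_prime pchar_p) -?ltnNge.
Qed.

Lemma bin_reflect k m :
  (k + m < p)%N -> 'C(p.-1 - k, m)%:R = (-1) ^+ m * 'C(k + m, m)%:R :> R.
Proof.
move=> lt_kmp; have mfact_neq0 : m`!%:R != 0 :> R by apply: pchar_fact_neq0; lia.
apply: (mulIf mfact_neq0); rewrite -mulrA -!natrM !bin_ffact.
exact: ffact_reflect.
Qed.

Lemma harmonic_rev k :
  (k <= p.-1)%N -> harmonic (p.-1 - k)%N = harmonic p.-1 + harmonic k :> R.
Proof.
elim: k => [|k IH] le_kp; first by rewrite subn0 [harmonic 0]big_geq ?addr0.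
have pk_eq : (p.-1 - k)%N = (p.-1 - k.+1).+1 by lia.
have := IH (ltnW le_kp); rewrite {1}pk_eq harmonicS (@natrN_pchar _ k.+1) ?invrN; last lia.
by rewrite harmonicS addrA => <-; rewrite subrK.
Qed.

Hypothesis p_gt2 : (2 < p)%N.

Lemma two_neq0_pchar : 2%:R != 0 :> R.
Proof. by rewrite -(dvdn_pcharf pchar_p) gtnNdvd. Qed.

Lemma harmonic_pred_eq0 : harmonic p.-1 = 0 :> R.
Proof.
have := harmonic_rev (leqnn p.-1); rewrite subnn [harmonic 0]big_geq // => /eqP.
rewrite eq_sym -mulr2n -mulr_natl mulf_eq0 (negbTE two_neq0_pchar) /=.
by move/eqP.
Qed.

Lemma harmonic_rev_pchar k : (k < p)%N -> harmonic (p.-1 - k)%N = harmonic k :> R.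
Proof. by move=> lt_kp; rewrite harmonic_rev ?harmonic_pred_eq0 ?add0r //; lia. Qed.

Lemma sum_binomial_harmonic_eq0 n q (e : R -> R) :
  (0 < q <= p)%N -> ~~ odd n || odd q ->
  \sum_(0 <= k < (p - q).+1)
     'C(q + k - 1, k)%:R ^+ n * (e (harmonic k) - e (harmonic (q + k - 1))) = 0.
Proof.
move=> /andP[q_gt0 le_qp] parity.
have binq j : 'C(q + j - 1, j) = 'C(j + q.-1, q.-1).
  by rewrite -[RHS]bin_sub ?leq_addl // addnK; congr 'C(_, _); lia.
have even_sign : (-1) ^+ (q.-1 * n) = 1 :> R.
  by rewrite -signr_odd oddM; case: (q) q_gt0 parity => //= q' _; case: (odd n); case: (odd q').
apply: (sum_antisym_eq0 two_neq0_pchar) => k le_k.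
have binom_refl :
    'C(q + (p - q - k) - 1, p - q - k)%:R = (-1) ^+ q.-1 * 'C(q + k - 1, k)%:R :> R.
  by rewrite !binq (_ : p - q - k + q.-1 = p.-1 - k)%N ?bin_reflect //; lia.
have harm_refl1 : harmonic (p - q - k) = harmonic (q + k - 1) :> R.
  by rewrite -(@harmonic_rev_pchar (q + k - 1)); [congr harmonic | ]; lia.
have harm_refl2 : harmonic (q + (p - q - k) - 1) = harmonic k :> R.
  by rewrite -(@harmonic_rev_pchar k); [congr harmonic | ]; lia.
rewrite binom_refl harm_refl1 harm_refl2 exprMn -exprM even_sign mul1r.
by rewrite -mulrN opprB.
Qed.

End PrimeCharacteristic.

Section ReductionModp.

Variable p : nat.

(* The graph of the reduction map from p-integral rationals onto 'F_p. *)
Definition reduces (x : rat) (u : 'F_p) : Prop :=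
  exists a d : int, [/\ x * d%:~R = a%:~R, d%:~R != 0 :> 'F_p & u = a%:~R / d%:~R].

Lemma reducesD x y u v : reduces x u -> reduces y v -> reduces (x + y) (u + v).
Proof.
move=> [a [d [xd d0 ->]]] [b [c [yc c0 ->]]].
exists (a * c + b * d), (d * c); split; rewrite ?intrD !intrM ?mulf_neq0 //.
  by rewrite -xd -yc; ring.
by field; rewrite d0 c0.
Qed.

Lemma reducesM x y u v : reduces x u -> reduces y v -> reduces (x * y) (u * v).
Proof.
move=> [a [d [xd d0 ->]]] [b [c [yc c0 ->]]].
exists (a * b), (d * c); split; rewrite !intrM ?mulf_neq0 //.
  by rewrite -xd -yc; ring.
by field; rewrite d0 c0.
Qed.

Lemma reducesN x u : reduces x u -> reduces (- x) (- u).
Proof.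
move=> [a [d [xd d0 ->]]]; exists (- a), d; split; rewrite // intrN.
  by rewrite -xd; ring.
by rewrite mulNr.
Qed.

Lemma reducesB x y u v : reduces x u -> reduces y v -> reduces (x - y) (u - v).
Proof. by move=> xu /reducesN; apply: reducesD. Qed.

Lemma reduces_nat n : reduces n%:R n%:R.
Proof. by exists n, 1; rewrite mulr1 divr1 oner_neq0. Qed.

Lemma reducesX x u k : reduces x u -> reduces (x ^+ k) (u ^+ k).
Proof.
move=> xu; elim: k => [|k IH]; first exact: (reduces_nat 1).
by rewrite !exprS; apply: reducesM.
Qed.

Lemma reducesVn n : n%:R != 0 :> 'F_p -> reduces n%:R^-1 n%:R^-1.
Proof.
move=> n0; exists 1, n; split; rewrite ?div1r //.
by rewrite mulVf // pnatr_eq0; apply: contra n0 => /eqP ->.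
Qed.

Lemma reduces_sum (I : Type) (r : seq I) (P : pred I) F G :
  (forall i, P i -> reduces (F i) (G i)) ->
  reduces (\sum_(i <- r | P i) F i) (\sum_(i <- r | P i) G i).
Proof.
apply: big_ind2 => [|x u y v]; [exact: (reduces_nat 0) | exact: reducesD].
Qed.

Hypothesis p_prime : prime p.

Lemma rat_cong0_reduces x : reduces x 0 -> rat_cong p 1 x 0.
Proof.
have pchar_p := pchar_Fp p_prime.
move=> [a [d [xd d0 /esym/eqP]]].
rewrite mulf_eq0 invr_eq0 (negbTE d0) orbF => /eqP a0.
have num_den : numq x * d = a * denq x.
  by apply: (@intr_inj rat); rewrite !intrM numqE -xd; ring.
have den_dvd_d : (denq x %| d)%Z.
  rewrite -(@Gauss_dvdzr _ (numq x)) ?num_den ?dvdz_mull //.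
  by rewrite coprimezE coprime_sym coprime_num_den.
have den0 : (denq x)%:~R != 0 :> 'F_p.
  by case/dvdzP: den_dvd_d d0 => c ->; rewrite intrM mulf_eq0 negb_or => /andP[].
have num0 : (numq x)%:~R = 0 :> 'F_p.
  by apply/eqP; rewrite -(mulIr_eq0 _ (mulIf d0)) -intrM num_den intrM a0 mul0r.
rewrite /rat_cong /in_pZp subr0 expn1 prime_coprime //.
split; last by rewrite (dvdz_pcharf pchar_p) num0.
by move: den0; rewrite -(dvdz_pcharf pchar_p).
Qed.

Lemma reduces_harm k : (k < p)%N -> reduces (harm k) (harmonic k).
Proof.
move=> lt_kp; rewrite /harm /harmonic !big_seq; apply: reduces_sum => j.
rewrite mem_index_iota => /andP[j_gt0 le_jk]; apply: reducesVn.
by rewrite -(dvdn_pcharf (pchar_Fp p_prime)) gtnNdvd //; lia.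
Qed.

End ReductionModp.

Lemma poch_ffact q k : poch q%:R k = ((q + k).-1 ^_ k)%:R.
Proof.
elim: k => [|k IH]; first by rewrite /poch big_ord0.
by rewrite /poch big_ord_recr -/(poch _ _) IH addnS ffactnS /= natrM mulrC -natrD.
Qed.

Lemma poch_ratio_bin q k : poch q%:R k / poch 1 k = 'C(q + k - 1, k)%:R.
Proof.
rewrite poch_ffact (poch_ffact 1) add1n /= ffactnn -bin_ffact subn1 natrM mulfK //.
by rewrite pnatr_eq0 -lt0n fact_gt0.
Qed.

Lemma sum_poch_harm_cong0 n q p (E : rat -> rat) (e : 'F_p -> 'F_p) :
  prime p -> (2 < p)%N -> (0 < q <= p)%N -> ~~ odd n || odd q ->
  (forall x u, reduces x u -> reduces (E x) (e u)) ->
  rat_cong p 1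
    (\sum_(0 <= k < (p - q).+1)
        (poch q%:R k ^+ n / poch 1 k ^+ n) * (E (harm k) - E (harm (q + k - 1)))) 0.
Proof.
move=> p_prime p_gt2 q_range parity reducesE; apply: rat_cong0_reduces => //.
rewrite -(sum_binomial_harmonic_eq0 (pchar_Fp p_prime) p_gt2 e q_range parity).
rewrite !big_seq; apply: reduces_sum => k; rewrite mem_index_iota => /andP[_ lt_k].
rewrite -expr_div_n poch_ratio_bin; apply: reducesM; first exact/reducesX/reduces_nat.
by apply: reducesB; apply/reducesE/reduces_harm => //; lia.
Qed.

Theorem lemma3p1 (n q p : nat) :
  (2 < n)%N -> (0 < q)%N -> (~~ odd n || odd q) ->
  prime p -> (maxn n ((q - 1) * n + 1) < p)%N ->
  rat_cong p 1
    (\sum_(0 <= k < (p - q).+1)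
        (poch q%:R k ^+ n / poch 1 k ^+ n) * (harm k - harm (q + k - 1))) 0
  /\
  rat_cong p 1
    (\sum_(0 <= k < (p - q).+1)
        (poch q%:R k ^+ n / poch 1 k ^+ n) * (harm k ^+ 2 - harm (q + k - 1) ^+ 2)) 0.
Proof.
rewrite gtn_max => n_gt2 q_gt0 parity p_prime /andP[lt_np lt_qnp].
have p_gt2 : (2 < p)%N by apply: ltn_trans lt_np.
have q_range : (0 < q <= p)%N by rewrite q_gt0 /=; nia.
split.
  by apply: (@sum_poch_harm_cong0 n q p id id).
apply: (@sum_poch_harm_cong0 n q p (fun x => x ^+ 2) (fun u => u ^+ 2)) => // x u.
exact: reducesX.
Qed.
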